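(* Consider the algorithm described in the context, and suppose it does not terminate finitely. Then for every $k\in\mathbb{N}$, $$\|c_k\|_2-\|c_k+J_ks_k\|_2=\|c_k\|_2-\|c_k+J_kv_k\|_2\ge \frac{1}{2\kappa_c}\|J_k^Tc_k\|_2^2\min\Big\{\frac{1}{1+\kappa_{\nabla c}^2},\ \kappa_v\alpha_k\Big\}.$$
   Context: Problem: $\min_{x\in\mathbb{R}^n} f(x)+r(x)$ subject to $c(x)=0$, where $f:\mathbb{R}^n\to\mathbb{R}$ and $c:\mathbb{R}^n\to\mathbb{R}^m$ ($m\le n$) are continuously differentiable and $r:\mathbb{R}^n\to\mathbb{R}_{\ge 0}$ is convex. Write $g(x)=\nabla f(x)$, $J(x)=\nabla c(x)^T$, and $f_k=f(x_k)$, $g_k=g(x_k)$, $c_k=c(x_k)$, $J_k=J(x_k)$, $r_k=r(x_k)$. All norms are Euclidean (the matrix norm is the spectral norm). Merit function: $\Phi_\tau(x)=\tau(f(x)+r(x))+\|c(x)\|_2$. Algorithm: inputs $x_0$, $\alpha_0>0$, $\tau_{-1}>0$; constants $\kappa_v>0$, $\sigma_c,\epsilon_\tau,\xi,\eta\in(0,1)$, $\sigma_u\in(0,1/2]$, $\bar\sigma_u:=\sigma_u+\tfrac12$. For $k=0,1,\dots$: 1. If $J_k^Tc_k\ne0$, compute $v_k$ with $v_k\in\mathrm{Range}(J_k^T)$, $\|v_k\|_2\le\kappa_v\alpha_k\|J_k^Tc_k\|_2$, $\|c_k+J_kv_k\|_2\le\|c_k+J_kv_k^c\|_2$, where $v_k^c=-\beta_k^cJ_k^Tc_k$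 with $\beta_k^c$ minimizing $\tfrac12\|c_k-\beta J_kJ_k^Tc_k\|_2^2$ over $0\le\beta\le\kappa_v\alpha_k$. Otherwise set $v_k=0$, and if $c_k\ne0$ terminate. 2. Let $u_k$ be the unique minimizer of $g_k^Tu+\tfrac1{2\alpha_k}\|u\|_2^2+r(x_k+v_k+u)$ subject to $J_ku=0$; set $s_k=v_k+u_k$. If $s_k=0$, terminate. 3. Let $D_k:=g_k^Ts_k+\bar\sigma_u\|s_k\|_2^2/\alpha_k+r(x_k+s_k)-r_k$; $\tau_{k,\mathrm{trial}}=\infty$ if $D_k\le0$, else $\tau_{k,\mathrm{trial}}=(1-\sigma_c)(\|c_k\|_2-\|c_k+J_kv_k\|_2)/D_k$. Set $\tau_k=\tau_{k-1}$ if $\tau_{k-1}\le\tau_{k,\mathrm{trial}}$, else $\tau_k=\min\{(1-\epsilon_\tau)\tau_{k-1},\tau_{k,\mathrm{trial}}\}$. 4. With $\Delta q_k(s,\tau):=-\tau(g_k^Ts+\tfrac1{2\alpha_k}\|s\|_2^2+r(x_k+s)-r_k)+\|c_k\|_2-\|c_k+J_ks\|_2$: if $\Phi_{\tau_k}(x_k+s_k)\le\Phi_{\tau_k}(x_k)-\eta\Delta q_k(s_k,\tau_k)$ set $x_{k+1}=x_k+s_k$, $\alpha_{k+1}=\alpha_k$; else $x_{k+1}=x_k$, $\alpha_{k+1}=\xi\alpha_k$. Standing assumption: there is an open convex set $\mathcal X$ containing all iterates $x_k$ and trial points $x_k+s_k$ such that $f$ is bounded below on $\mathcal X$, $\nabla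 f$ is bounded and Lipschitz continuous on $\mathcal X$, $\|c(x)\|_2\le\kappa_c$ and $\|J(x)\|_2\le\kappa_{\nabla c}$ for all $x\in\mathcal X$ (constants $\kappa_c,\kappa_{\nabla c}>0$), $J$ is Lipschitz continuous on $\mathcal X$, and all subgradients of $r$ at points of $\mathcal X$ are uniformly bounded in norm. *)

From HB Require Import structures.
From mathcomp Require Import all_boot all_order all_algebra.
From mathcomp Require Import all_classical all_reals all_analysis.
Set Implicit Arguments. Unset Strict Implicit. Unset Printing Implicit Defensive.
Import Order.TTheory GRing.Theory Num.Theory.
Import numFieldNormedType.Exports.
Local Open Scope classical_set_scope.
Local Open Scope ring_scope.

Section Defs.
Variable R : realType.

Definition dotv {k : nat} (u v : 'cV[R]_k) : R := \sum_(i < k) u i 0 * v i 0.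
Definition norm2 {k : nat} (u : 'cV[R]_k) : R := Num.sqrt (dotv u u).

(* ||A||_2 <= a for the spectral norm ||A||_2 = sup_{d <> 0} ||A d||_2/||d||_2. *)
Definition specnorm_le {p q : nat} (A : 'M[R]_(p, q)) (a : R) : Prop :=
  forall d : 'cV[R]_q, norm2 (A *m d) <= a * norm2 d.

Variables (n m : nat).

Definition convex_set (X : set 'cV[R]_n) : Prop :=
  forall x y, X x -> X y -> forall t : R, 0 <= t <= 1 -> X (t *: x + (1 - t) *: y).
Definition convex_fun (r : 'cV[R]_n -> R) : Prop :=
  forall x y (t : R), 0 <= t <= 1 ->
    r (t *: x + (1 - t) *: y) <= t * r x + (1 - t) * r y.

Definition subgrad (r : 'cV[R]_n -> R) (x w : 'cV[R]_n) : Prop :=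
  forall y, r x + dotv w (y - x) <= r y.

Definition merit (f r : 'cV[R]_n -> R) (c : 'cV[R]_n -> 'cV[R]_m) (tau : R)
  (x : 'cV[R]_n) : R := tau * (f x + r x) + norm2 (c x).

Definition cauchy_obj (ck : 'cV[R]_m) (Jk : 'M[R]_(m, n)) (beta : R) : R :=
  2^-1 * norm2 (ck - beta *: (Jk *m Jk^T *m ck)) ^+ 2.

Definition step1_ok (kv ak : R) (ck : 'cV[R]_m) (Jk : 'M[R]_(m, n))
  (vk : 'cV[R]_n) : Prop :=
  if Jk^T *m ck != 0 then
    [/\ (exists w : 'cV[R]_m, vk = Jk^T *m w),
        norm2 vk <= kv * ak * norm2 (Jk^T *m ck) &
        exists betac : R,
          [/\ 0 <= betac <= kv * ak,
              (forall b : R, 0 <= b <= kv * ak ->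
                 cauchy_obj ck Jk betac <= cauchy_obj ck Jk b) &
              norm2 (ck + Jk *m vk)
                <= norm2 (ck + Jk *m (- (betac *: (Jk^T *m ck))))]]
  else vk = 0.

Definition step2_obj (r : 'cV[R]_n -> R) (gk xk vk : 'cV[R]_n) (ak : R)
  (u : 'cV[R]_n) : R :=
  dotv gk u + (2 * ak)^-1 * norm2 u ^+ 2 + r (xk + vk + u).

Definition step2_ok (r : 'cV[R]_n -> R) (gk xk vk : 'cV[R]_n) (ak : R)
  (Jk : 'M[R]_(m, n)) (uk : 'cV[R]_n) : Prop :=
  [/\ Jk *m uk = 0,
      (forall u, Jk *m u = 0 -> step2_obj r gk xk vk ak uk <= step2_obj r gk xk vk ak u) &
      (forall u, Jk *m u = 0 -> step2_obj r gk xk vk ak u <= step2_obj r gk xk vk ak uk ->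
         u = uk)].

(* Step 3: D_k and the merit parameter update (tau_trial = +oo when D_k <= 0) *)
Definition Dk (r : 'cV[R]_n -> R) (sigu : R) (gk xk sk : 'cV[R]_n) (ak : R) : R :=
  dotv gk sk + (sigu + 2^-1) * norm2 sk ^+ 2 / ak + r (xk + sk) - r xk.

Definition tau_update (sigc epst : R) (D : R) (ck : 'cV[R]_m) (Jk : 'M[R]_(m, n))
  (vk : 'cV[R]_n) (taup : R) : R :=
  if D <= 0 then taup
  else let trial := (1 - sigc) * (norm2 ck - norm2 (ck + Jk *m vk)) / D in
       if taup <= trial then taup else Num.min ((1 - epst) * taup) trial.

Definition dq (r : 'cV[R]_n -> R) (gk xk : 'cV[R]_n) (ak : R) (ck : 'cV[R]_m)
  (Jk : 'M[R]_(m, n)) (s : 'cV[R]_n) (tau : R) : R :=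
  - tau * (dotv gk s + (2 * ak)^-1 * norm2 s ^+ 2 + r (xk + s) - r xk)
  + norm2 ck - norm2 (ck + Jk *m s).

(* The full algorithm run, assuming it never terminates. Sequences:
   x k = x_k, a k = alpha_k, tau k = tau_k (tau_{-1} = taum1), v k, u k. *)
Definition algorithm_run (f r : 'cV[R]_n -> R) (g : 'cV[R]_n -> 'cV[R]_n)
  (c : 'cV[R]_n -> 'cV[R]_m) (J : 'cV[R]_n -> 'M[R]_(m, n))
  (kv sigc epst xi eta sigu taum1 : R)
  (x : nat -> 'cV[R]_n) (a : nat -> R) (tau : nat -> R)
  (v u : nat -> 'cV[R]_n) : Prop :=
  forall k : nat,
    let xk := x k in let ak := a k in
    let gk := g xk in let ck := c xk in let Jk := J xk in
    let sk := v k + u k in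
    let taup := if k is k'.+1 then tau k' else taum1 in
    (* step 1, and no termination in step 1 *)
    step1_ok kv ak ck Jk (v k) /\
    ~ (Jk^T *m ck = 0 /\ ck != 0) /\
    (* step 2, and no termination in step 2 *)
    step2_ok r gk xk (v k) ak Jk (u k) /\
    sk != 0 /\
    tau k = tau_update sigc epst (Dk r sigu gk xk sk ak) ck Jk (v k) taup /\
    (if merit f r c (tau k) (xk + sk)
             <= merit f r c (tau k) xk - eta * dq r gk xk ak ck Jk sk (tau k)
        then x k.+1 = xk + sk /\ a k.+1 = ak
        else x k.+1 = xk /\ a k.+1 = xi * ak).

Definition standing_assumption (f r : 'cV[R]_n -> R) (g : 'cV[R]_n -> 'cV[R]_n)
  (c : 'cV[R]_n -> 'cV[R]_m) (J : 'cV[R]_n -> 'M[R]_(m, n)) (kc kJ : R)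
  (x : nat -> 'cV[R]_n) (v u : nat -> 'cV[R]_n) : Prop :=
  exists X : set 'cV[R]_n,
    open X /\ convex_set X /\
    (forall k, X (x k) /\ X (x k + (v k + u k))) /\
    (exists lb : R, forall y, X y -> lb <= f y) /\
    (exists M : R, forall y, X y -> norm2 (g y) <= M) /\
    (exists L : R, forall y z, X y -> X z -> norm2 (g y - g z) <= L * norm2 (y - z)) /\
    (forall y, X y -> norm2 (c y) <= kc /\ specnorm_le (J y) kJ) /\
    (exists L : R, forall y z, X y -> X z -> specnorm_le (J y - J z) (L * norm2 (y - z))) /\
    (exists M : R, forall y w, X y -> subgrad r y w -> norm2 w <= M).

End Defs.

From HB Require Import structures.
From mathcomp Require Import all_boot all_order all_algebra.
From mathcomp Require Import all_classical all_reals all_analysis.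
From mathcomp Require Import ring lra.
Import Order.TTheory GRing.Theory Num.Theory.
Import numFieldNormedType.Exports.
Local Open Scope classical_set_scope.
Local Open Scope ring_scope.

(* The Cauchy step [-beta J^T c] with [beta = min(1/(1 + kJ^2), kv alpha)]
   reduces the squared residual by at least [beta ||J^T c||^2], because
   [beta ||J J^T c||^2 <= beta kJ^2 ||J^T c||^2 <= ||J^T c||^2]; the normal
   step [v] does at least as well, and [u] lies in the kernel of [J].
   Turning the decrease of the squares into a decrease of the norms costs the
   factor [||c|| + ||c + J v|| <= 2 kc]. *)

Section EuclideanNorm.
Context {R : realType}.

Lemma dotvE k (u w : 'cV[R]_k) : dotv u w = (u^T *m w) 0 0.
Proof. by rewrite /dotv !mxE; apply: eq_bigr => i _; rewrite mxE. Qed.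

Lemma dotv_ge0 k (u : 'cV[R]_k) : 0 <= dotv u u.
Proof. by apply: sumr_ge0 => i _; rewrite -expr2 sqr_ge0. Qed.

Lemma sqr_norm2 k (u : 'cV[R]_k) : norm2 u ^+ 2 = dotv u u.
Proof. by rewrite /norm2 sqr_sqrtr // dotv_ge0. Qed.

Lemma norm2_ge0 k (u : 'cV[R]_k) : 0 <= norm2 u.
Proof. exact: sqrtr_ge0. Qed.

Lemma norm2_0 k : norm2 (0 : 'cV[R]_k) = 0.
Proof. by rewrite /norm2 /dotv big1 ?sqrtr0 // => i _; rewrite mxE mul0r. Qed.

Lemma dotv_mulmx p q (c : 'cV[R]_p) (A : 'M[R]_(p, q)) (w : 'cV[R]_q) :
  dotv c (A *m w) = dotv (A^T *m c) w.
Proof. by rewrite !dotvE trmx_mul trmxK mulmxA. Qed.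

Lemma sqr_norm2_subZ k (c y : 'cV[R]_k) (b : R) :
  norm2 (c - b *: y) ^+ 2
    = norm2 c ^+ 2 - 2 * b * dotv c y + b ^+ 2 * norm2 y ^+ 2.
Proof.
rewrite !sqr_norm2 /dotv !mulr_sumr -sumrB -big_split /=.
by apply: eq_bigr => i _; rewrite !mxE; ring.
Qed.

Lemma specnorm_le_sqr {p q} {A : 'M[R]_(p, q)} {a : R} (d : 'cV[R]_q) :
  specnorm_le A a -> norm2 (A *m d) ^+ 2 <= a ^+ 2 * norm2 d ^+ 2.
Proof.
by move=> /(_ d) hA; rewrite -exprMn !expr2; apply: ler_pM; rewrite ?norm2_ge0.
Qed.

End EuclideanNorm.

Section CauchyStep.
Context {R : realType} {n m : nat}.
Implicit Types (c : 'cV[R]_m) (J : 'M[R]_(m, n)) (b kJ kv ak : R).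

Lemma cauchy_objE c J b :
  2 * cauchy_obj c J b
    = norm2 c ^+ 2 - 2 * b * norm2 (J^T *m c) ^+ 2
      + b ^+ 2 * norm2 (J *m (J^T *m c)) ^+ 2.
Proof.
rewrite /cauchy_obj mulrA mulfV ?pnatr_eq0 // mul1r -mulmxA sqr_norm2_subZ.
by rewrite dotv_mulmx -sqr_norm2.
Qed.

Lemma sqr_norm2_cauchy_step c J b :
  norm2 (c + J *m - (b *: (J^T *m c))) ^+ 2 = 2 * cauchy_obj c J b.
Proof.
by rewrite cauchy_objE mulmxN -scalemxAr sqr_norm2_subZ dotv_mulmx -sqr_norm2.
Qed.

Lemma cauchy_obj_le c J b kJ :
  specnorm_le J kJ -> 0 <= b -> b * kJ ^+ 2 <= 1 ->
  2 * cauchy_obj c J b <= norm2 c ^+ 2 - b * norm2 (J^T *m c) ^+ 2.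
Proof.
move=> hJ hb0 hbkJ; rewrite cauchy_objE.
set W := norm2 (J^T *m c) ^+ 2.
have hW0 : 0 <= W by rewrite sqr_ge0.
have hbJ : b * norm2 (J *m (J^T *m c)) ^+ 2 <= W.
  apply: le_trans (_ : b * (kJ ^+ 2 * W) <= W).
    by rewrite ler_wpM2l // specnorm_le_sqr.
  by rewrite mulrA -[leRHS]mul1r ler_wpM2r.
have := ler_wpM2l hb0 hbJ; rewrite mulrA -expr2; lra.
Qed.

Definition cauchy_steplen kJ kv ak : R := Num.min (1 + kJ ^+ 2)^-1 (kv * ak).

Lemma cauchy_steplen_ge0 kJ kv ak : 0 <= kv * ak -> 0 <= cauchy_steplen kJ kv ak.
Proof. by move=> hka; rewrite le_min hka invr_ge0 addr_ge0 ?sqr_ge0. Qed.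

Lemma cauchy_steplen_le kJ kv ak : cauchy_steplen kJ kv ak <= kv * ak.
Proof. by rewrite ge_min lexx orbT. Qed.

Lemma cauchy_steplen_mul_le1 kJ kv ak : cauchy_steplen kJ kv ak * kJ ^+ 2 <= 1.
Proof.
have hkJ : 0 < 1 + kJ ^+ 2 by rewrite ltr_pwDl ?sqr_ge0.
apply: le_trans (_ : (1 + kJ ^+ 2)^-1 * kJ ^+ 2 <= 1).
  by rewrite ler_wpM2r ?sqr_ge0 // ge_min lexx.
by rewrite mulrC ler_pdivrMr // mul1r lerDr.
Qed.

Lemma step1_sqr_decrease kv ak kJ c J (v : 'cV[R]_n) :
  0 <= kv * ak -> specnorm_le J kJ -> step1_ok kv ak c J v ->
  norm2 (c + J *m v) ^+ 2
    <= norm2 c ^+ 2 - cauchy_steplen kJ kv ak * norm2 (J^T *m c) ^+ 2.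
Proof.
move=> hka hJ; rewrite /step1_ok; case: ifPn => [_ | /negPn/eqP -> ->].
  move=> [_ _ [betac [_ hmin hv]]].
  set b0 := cauchy_steplen kJ kv ak.
  have hb0 : 0 <= b0 by exact: cauchy_steplen_ge0.
  apply: le_trans (_ : _ <= 2 * cauchy_obj c J b0) _; last first.
    exact: cauchy_obj_le hJ hb0 (cauchy_steplen_mul_le1 _ _ _).
  apply: le_trans (_ : _ <= 2 * cauchy_obj c J betac) _.
    by rewrite -sqr_norm2_cauchy_step ler_pXn2r ?nnegrE ?norm2_ge0.
  by rewrite ler_pM2l // hmin // hb0 cauchy_steplen_le.
by rewrite mulmx0 addr0 norm2_0 expr0n mulr0 subr0.
Qed.

End CauchyStep.

Lemma le_gap_of_sqr_le {R : realFieldType} {s t K D : R} :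
  0 <= s -> 0 <= t -> t <= K -> 0 <= D ->
  s ^+ 2 <= t ^+ 2 - D -> D <= 2 * K * (t - s).
Proof.
move=> hs ht htK hD hst2.
have hst : s <= t by rewrite -(ler_pXn2r (_ : 0 < 2)%N) ?nnegrE //; lra.
have hgap : D <= (t - s) * (t + s) by rewrite mulrDr !mulrBl; lra.
apply: le_trans hgap _; rewrite [leRHS]mulrC.
by apply: ler_wpM2l; [rewrite subr_ge0 | lra].
Qed.

Lemma run_stepsize_gt0 {R : realType} {n m : nat}
    {f r : 'cV[R]_n -> R} {g : 'cV[R]_n -> 'cV[R]_n}
    {c : 'cV[R]_n -> 'cV[R]_m} {J : 'cV[R]_n -> 'M[R]_(m, n)}
    {kv sigc epst xi eta sigu taum1 : R}
    {x : nat -> 'cV[R]_n} {a tau : nat -> R} {v u : nat -> 'cV[R]_n} :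
  0 < xi -> 0 < a 0%N ->
  algorithm_run f r g c J kv sigc epst xi eta sigu taum1 x a tau v u ->
  forall k, 0 < a k.
Proof.
move=> hxi ha0 hrun; elim=> [//|k IHk].
have [_ [_ [_ [_ [_ ]]]]] := hrun k.
by case: ifP => _ [_ ->] //; rewrite mulr_gt0.
Qed.

Theorem lemma3p6 (R : realType) (n m : nat) (hmn : (m <= n)%N)
  (f r : 'cV[R]_n -> R) (g : 'cV[R]_n -> 'cV[R]_n)
  (c : 'cV[R]_n -> 'cV[R]_m) (J : 'cV[R]_n -> 'M[R]_(m, n))
  (* f, c continuously differentiable with gradient g and Jacobian J *)
  (hf : forall y, differentiable f y /\ forall d, 'd f y d = dotv (g y) d)
  (hg : continuous g)
  (hc : forall y, differentiable c y /\ forall d, 'd c y d = J y *m d)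
  (hJ : continuous J)
  (* r : R^n -> R_{>=0} convex *)
  (hr0 : forall y, 0 <= r y) (hrc : convex_fun r)
  (* algorithm constants *)
  (kv sigc epst xi eta sigu taum1 kc kJ : R)
  (hkv : 0 < kv) (hsigc : 0 < sigc < 1) (hepst : 0 < epst < 1)
  (hxi : 0 < xi < 1) (heta : 0 < eta < 1) (hsigu : 0 < sigu <= 2^-1)
  (htaum1 : 0 < taum1) (hkc : 0 < kc) (hkJ : 0 < kJ)
  (* iterates *)
  (x : nat -> 'cV[R]_n) (a : nat -> R) (tau : nat -> R) (v u : nat -> 'cV[R]_n)
  (ha0 : 0 < a 0%N)
  (hrun : algorithm_run f r g c J kv sigc epst xi eta sigu taum1 x a tau v u)
  (hsa : standing_assumption f r g c J kc kJ x v u) :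
  forall k : nat,
    norm2 (c (x k)) - norm2 (c (x k) + J (x k) *m (v k + u k))
      = norm2 (c (x k)) - norm2 (c (x k) + J (x k) *m v k)
    /\ norm2 (c (x k)) - norm2 (c (x k) + J (x k) *m v k)
      >= (2 * kc)^-1 * norm2 ((J (x k))^T *m c (x k)) ^+ 2
         * Num.min (1 + kJ ^+ 2)^-1 (kv * a k).
Proof.
move=> k.
have [hxi0 _] := andP hxi.
have hka : 0 <= kv * a k.
  by rewrite mulr_ge0 ?ltW ?(run_stepsize_gt0 hxi0 ha0 hrun).
have [hstep1 [_ [[hJu _ _] _]]] := hrun k.
have [X [_ [_ [hXrun [_ [_ [_ [hXcJ _]]]]]]]] := hsa.
have [hckc hJkJ] := hXcJ _ (proj1 (hXrun k)).
split; first by rewrite mulmxDr hJu addr0.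
rewrite -mulrA ler_pdivrMl ?mulr_gt0 // mulrC.
apply: le_gap_of_sqr_le _ _ hckc _ _; rewrite ?norm2_ge0 //.
  by rewrite mulr_ge0 ?sqr_ge0 ?cauchy_steplen_ge0.
exact: step1_sqr_decrease hka hJkJ hstep1.
Qed.
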